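(* Let $\mathcal{M}$ be a metric space on $\omega$ whose completion $\mathcal{C}(\mathcal{M})$ is a proper metric space. Let $\alpha$ be an ordinal and let $\bar a,\bar b$ be tuples of elements of $\mathcal{C}(\mathcal{M})$ of the same length $p$. Suppose $(\bar a,\bar b)$ is the limit in $\mathcal{C}(\mathcal{M})^{2p}$ of a sequence $\langle(\bar a_n,\bar b_n):n\in\omega\rangle$ such that $\mathrm{R}(\bar a_n,\bar b_n)>\alpha$ for all $n$. Then $\mathrm{R}(\bar a,\bar b)>\alpha$.
   Context: A metric space is proper if every closed ball $\{y:d(x,y)\le r\}$ is compact. The metric on $\mathcal{C}(\mathcal{M})^k$ is $d(\bar u,\bar v)=\sum_{i<k}d(u_i,v_i)$. $\mathrm{REC}$ is the set of recursive, strictly decreasing $f:\omega\to\mathbb{Q}^+$ converging to $0$. For $f\in\mathrm{REC}$, tuples $\bar a=(a_0,\dots,a_{p-1})$, $\bar b=(b_0,\dots,b_{p-1})$ from $\mathcal{C}(\mathcal{M})$ and an ordinal $\alpha$, the game $G^{f,\bar a,\bar b}_\alpha$: at move $i=0,1,\dots$, Player 1 plays an ordinal $\alpha_i$ with $\alpha_0<\alpha$ and $\alpha_i<\alpha_{i-1}$ for $i>0$, together with an element of $\mathcal{M}$: if $i$ is even Player 1 plays $c_i\in\mathcal{M}$ and Player 2 responds $d_i\in\mathcal{M}$; if $i$ is odd Player 1 plays $d_i\in\mathcal{M}$ and Player 2 responds $c_i\in\mathcal{M}$. The game ends after Player 2 answers the move where $\alpha_{k-1}=0$. Player 2 wins iff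 (I) $|d(a_i,c_j)-d(b_i,d_j)|<f(j)$ for all $i<p$, $j<k$, and (II) $|d(c_i,c_j)-d(d_i,d_j)|<f(i)+f(j)$ for all $i,j<k$. $\bar a\sim^f_\alpha\bar b$ means Player 2 has a winning strategy in $G^{f,\bar a,\bar b}_\alpha$; $\mathrm{R}(\bar a,\bar b)$ is the least ordinal $\mu$ such that $\neg(\bar a\sim^f_\mu\bar b)$ for some $f\in\mathrm{REC}$, or $\infty$ if none. *)

From Stdlib Require Import Reals QArith Qreals List Arith.
Open Scope R_scope.

Definition is_metric {X : Type} (d : X -> X -> R) : Prop :=
  (forall x y, 0 <= d x y) /\
  (forall x y, d x y = 0 <-> x = y) /\
  (forall x y, d x y = d y x) /\
  (forall x y z, d x z <= d x y + d y z).

Definition cauchy {X : Type} (d : X -> X -> R) (u : nat -> X) : Prop :=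
  forall eps, 0 < eps -> exists N, forall m n, (N <= m)%nat -> (N <= n)%nat ->
    d (u m) (u n) < eps.

Definition converges_to {X : Type} (d : X -> X -> R) (u : nat -> X) (l : X) : Prop :=
  forall eps, 0 < eps -> exists N, forall n, (N <= n)%nat -> d (u n) l < eps.

Definition complete {X : Type} (d : X -> X -> R) : Prop :=
  forall u, cauchy d u -> exists l, converges_to d u l.

Definition is_open {X : Type} (d : X -> X -> R) (U : X -> Prop) : Prop :=
  forall x, U x -> exists e, 0 < e /\ forall y, d x y < e -> U y.

Definition compact {X : Type} (d : X -> X -> R) (K : X -> Prop) : Prop :=
  forall (I : Type) (U : I -> X -> Prop),
    (forall i, is_open d (U i)) ->
    (forall x, K x -> exists i, U i x) ->
    exists l : list I, forall x, K x -> exists i, In i l /\ U i x.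

Definition proper {X : Type} (d : X -> X -> R) : Prop :=
  forall x r, compact d (fun y => d x y <= r).

Definition dense_range {X : Type} (d : X -> X -> R) (iota : nat -> X) : Prop :=
  forall x eps, 0 < eps -> exists i, d x (iota i) < eps.

Definition is_completion {X : Type} (dM : nat -> nat -> R) (dX : X -> X -> R)
  (iota : nat -> X) : Prop :=
  is_metric dX /\ complete dX /\
  (forall i j, dX (iota i) (iota j) = dM i j) /\ dense_range dX iota.

(* a p-tuple of elements of X is represented by a : nat -> X (only i < p matter) *)

Fixpoint sum_lt (p : nat) (g : nat -> R) : R :=
  match p with O => 0 | S q => sum_lt q g + g q end.

Definition pair_tuple_dist {X : Type} (d : X -> X -> R) (p : nat)
  (a b a' b' : nat -> X) : R :=
  sum_lt p (fun i => d (a i) (a' i)) + sum_lt p (fun i => d (b i) (b' i)).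

Definition pair_tuple_limit {X : Type} (d : X -> X -> R) (p : nat)
  (an bn : nat -> nat -> X) (a b : nat -> X) : Prop :=
  forall eps, 0 < eps -> exists N, forall n, (N <= n)%nat ->
    pair_tuple_dist d p (an n) (bn n) a b < eps.

(* Ordinals are represented as elements of an arbitrary well-ordered type. *)
Definition well_order {O : Type} (lt : O -> O -> Prop) : Prop :=
  (forall x, ~ lt x x) /\
  (forall x y z, lt x y -> lt y z -> lt x z) /\
  (forall x y, lt x y \/ x = y \/ lt y x) /\
  well_founded lt.

Definition is_zero {O : Type} (lt : O -> O -> Prop) (z : O) : Prop :=
  forall o, ~ lt o z.

Inductive rcode : Type :=
| RZero : rcode
| RSucc : rcode
| RProj : nat -> rcode
| RComp : rcode -> list rcode -> rcode
| RPrec : rcode -> rcode -> rcode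
| RMin  : rcode -> rcode.

Inductive reval : rcode -> list nat -> nat -> Prop :=
| ev_zero : forall v, reval RZero v 0
| ev_succ : forall x v, reval RSucc (x :: v) (S x)
| ev_proj : forall i v, (i < length v)%nat -> reval (RProj i) v (nth i v 0%nat)
| ev_comp : forall g hs v ys y,
    revals hs v ys -> reval g ys y -> reval (RComp g hs) v y
| ev_prec0 : forall g h v y, reval g v y -> reval (RPrec g h) (0%nat :: v) y
| ev_precS : forall g h n v z y,
    reval (RPrec g h) (n :: v) z -> reval h (n :: z :: v) y ->
    reval (RPrec g h) (S n :: v) y
| ev_min : forall g v n,
    reval g (n :: v) 0%nat ->
    (forall m, (m < n)%nat -> exists k, reval g (m :: v) (S k)) ->
    reval (RMin g) v n
with revals : list rcode -> list nat -> list nat -> Prop :=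
| evs_nil : forall v, revals nil v nil
| evs_cons : forall h hs v y ys,
    reval h v y -> revals hs v ys -> revals (h :: hs) v (y :: ys).

Definition recursive_nat (g : nat -> nat) : Prop :=
  exists e, forall n, reval e (n :: nil) (g n).

Definition recursive_Qpos (f : nat -> Q) : Prop :=
  exists pn qd : nat -> nat, recursive_nat pn /\ recursive_nat qd /\
    forall n, (f n == inject_Z (Z.of_nat (S (pn n))) / inject_Z (Z.of_nat (S (qd n))))%Q.

Definition REC (f : nat -> Q) : Prop :=
  recursive_Qpos f /\
  (forall n, (0 < f n)%Q) /\
  (forall n, (f (S n) < f n)%Q) /\
  (forall eps, (0 < eps)%Q -> exists N, forall n, (N <= n)%nat -> (f n < eps)%Q).

(* A complete sequence of Player 1's ordinal choices alpha_0 > ... > alpha_{k-1} = 0,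
   alpha_0 < alpha. *)
Definition complete_ordinals {O : Type} (lt : O -> O -> Prop) (alpha : O)
  (k : nat) (s : nat -> O) : Prop :=
  (1 <= k)%nat /\ lt (s 0%nat) alpha /\
  (forall i, (0 < i)%nat -> (i < k)%nat -> lt (s i) (s (pred i))) /\
  is_zero lt (s (pred k)).

(* A strategy for Player 2 maps the history of Player 1's moves
   [(alpha_0,x_0); ...; (alpha_i,x_i)] to Player 2's answer at move i. *)
Definition strategy2 (O : Type) := list (O * nat) -> nat.

Definition game_sim {X O : Type} (dX : X -> X -> R) (iota : nat -> X)
  (lt : O -> O -> Prop) (p : nat) (f : nat -> Q) (a b : nat -> X) (alpha : O) : Prop :=
  exists sigma : strategy2 O,
    forall (k : nat) (s : nat -> O) (x : nat -> nat),
      complete_ordinals lt alpha k s ->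
      let y := fun i => sigma (map (fun j => (s j, x j)) (seq 0 (S i))) in
      let c := fun i => if Nat.even i then x i else y i in
      let dd := fun i => if Nat.even i then y i else x i in
      (forall i j, (i < p)%nat -> (j < k)%nat ->
         Rabs (dX (a i) (iota (c j)) - dX (b i) (iota (dd j))) < Q2R (f j)) /\
      (forall i j, (i < k)%nat -> (j < k)%nat ->
         Rabs (dX (iota (c i)) (iota (c j)) - dX (iota (dd i)) (iota (dd j)))
           < Q2R (f i) + Q2R (f j)).

(* R(a,b) > alpha, unfolded: there is no mu <= alpha and f in REC with
   not (a ~^f_mu b), i.e. a ~^f_mu b for all mu <= alpha and all f in REC. *)
Definition R_gt {X O : Type} (dX : X -> X -> R) (iota : nat -> X)
  (lt : O -> O -> Prop) (p : nat) (a b : nat -> X) (alpha : O) : Prop :=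
  forall mu, (lt mu alpha \/ mu = alpha) ->
    forall f, REC f -> game_sim dX iota lt p f a b mu.

From Stdlib Require Import Reals QArith Qreals List Lia Lra Classical ClassicalEpsilon.
Import ListNotations.
Open Scope R_scope.

(** Let [σ_n] be a winning strategy of Player 2 for [(ā_n, b̄_n)] and the
    shifted tolerance [j ↦ f (j+1)]; the slack [f j - f (j+1)] at move [j]
    absorbs all approximation errors.  After a history [h] of length [j+1]
    the answers [σ_n(h)] are bounded (condition (I) against [a_0], [b_0]), so
    by properness a subsequence of them, extracted inside the subsequences
    already chosen for the proper prefixes of [h], converges to some [z_h];
    the limit strategy answers with a point of [M] close to [z_h].  A finite
    play visits finitely many histories, so a single [n] far along the last
    subsequence has all of [σ_n]'s answers and [(ā_n, b̄_n)] close to the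
    limit data, and the win of [σ_n] transfers by the triangle inequality.
    For [p = 0] the game does not depend on the tuples at all. *)

Lemma recursive_nat_shift (g : nat -> nat) :
  recursive_nat g -> recursive_nat (fun n => g (S n)).
Proof.
  intros [e He]. exists (RComp e [RComp RSucc [RProj 0]]). intros n.
  apply ev_comp with [S n]; [|apply He].
  apply evs_cons; [|apply evs_nil].
  apply ev_comp with [n]; [|apply ev_succ].
  apply evs_cons; [|apply evs_nil].
  apply (ev_proj 0 [n]); simpl; lia.
Qed.

Lemma REC_shift (f : nat -> Q) : REC f -> REC (fun j => f (S j)).
Proof.
  intros [[pn [qd [Hpn [Hqd Hf]]]] [Hpos [Hdec Hlim]]].
  split; [|split; [|split]].
  - exists (fun n => pn (S n)), (fun n => qd (S n)).
    split; [|split]; [apply recursive_nat_shift; exact Hpn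
                    | apply recursive_nat_shift; exact Hqd
                    | intros n; apply Hf].
  - intros n; apply Hpos.
  - intros n; apply Hdec.
  - intros eps Heps. destruct (Hlim eps Heps) as [N HN].
    exists N; intros n Hn; apply HN; lia.
Qed.

Definition strictly_increasing (phi : nat -> nat) : Prop :=
  forall m, (phi m < phi (S m))%nat.

Lemma strictly_increasing_lt (phi : nat -> nat) :
  strictly_increasing phi -> forall m m', (m < m')%nat -> (phi m < phi m')%nat.
Proof.
  intros Hphi m m' Hm; induction Hm as [|m' _ IH]; [apply Hphi|].
  specialize (Hphi m'); lia.
Qed.

Lemma strictly_increasing_ge (phi : nat -> nat) :
  strictly_increasing phi -> forall m, (m <= phi m)%nat.
Proof. intros Hphi m; induction m as [|m IH]; [lia|]. specialize (Hphi m); lia. Qed.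

Lemma strictly_increasing_comp (phi psi : nat -> nat) :
  strictly_increasing phi -> strictly_increasing psi ->
  strictly_increasing (fun m => phi (psi m)).
Proof. intros Hphi Hpsi m. apply strictly_increasing_lt; auto. Qed.

Lemma eventually_forall_lt (k : nat) (P : nat -> nat -> Prop) :
  (forall j, (j < k)%nat -> exists M, forall m, (M <= m)%nat -> P j m) ->
  exists M, forall m, (M <= m)%nat -> forall j, (j < k)%nat -> P j m.
Proof.
  induction k as [|k IH]; intros HP.
  - exists 0%nat; intros; lia.
  - destruct IH as [M1 HM1]; [intros j Hj; apply HP; lia|].
    destruct (HP k) as [M2 HM2]; [lia|].
    exists (max M1 M2); intros m Hm j Hj.
    destruct (Nat.eq_dec j k) as [->|]; [apply HM2 | apply HM1]; lia.
Qed.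

Lemma list_upper_bound {I : Type} (g : I -> nat) (l : list I) (M : nat) :
  exists N, (M <= N)%nat /\ forall i, In i l -> (g i <= N)%nat.
Proof.
  induction l as [|i l [N [HMN HN]]]; [exists M; split; [lia | intros i []]|].
  exists (max (g i) N); split; [lia|].
  intros i' [<-|Hi']; [lia|]. specialize (HN i' Hi'); lia.
Qed.

Section Metric.
Context {X : Type} (d : X -> X -> R).

Hypothesis Hd : is_metric d.

Lemma dist_nonneg x y : 0 <= d x y.
Proof. apply Hd. Qed.

Lemma dist_refl x : d x x = 0.
Proof. apply Hd; reflexivity. Qed.

Lemma dist_sym x y : d x y = d y x.
Proof. apply Hd. Qed.

Lemma dist_triangle x y z : d x z <= d x y + d y z.
Proof. apply Hd. Qed.

Lemma dist_diff_perturb x z y w x' z' y' w' :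
  Rabs (d x z - d y w) <=
  Rabs (d x' z' - d y' w') + (d x x' + d z z') + (d y y' + d w w').
Proof.
  pose proof (dist_triangle x x' z). pose proof (dist_triangle x' z' z).
  pose proof (dist_triangle x' x z'). pose proof (dist_triangle x z z').
  pose proof (dist_triangle y y' w). pose proof (dist_triangle y' w' w).
  pose proof (dist_triangle y' y w'). pose proof (dist_triangle y w w').
  rewrite (dist_sym z' z), (dist_sym x' x), (dist_sym w' w), (dist_sym y' y) in *.
  unfold Rabs; destruct (Rcase_abs (d x z - d y w));
    destruct (Rcase_abs (d x' z' - d y' w')); lra.
Qed.

Lemma sum_lt_nonneg p g : (forall i, 0 <= g i) -> 0 <= sum_lt p g.
Proof. intros Hg; induction p as [|p IH]; simpl; [lra|]. specialize (Hg p); lra. Qed.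

Lemma sum_lt_term_le p g i :
  (forall i, 0 <= g i) -> (i < p)%nat -> g i <= sum_lt p g.
Proof.
  intros Hg Hi; induction p as [|p IH]; [lia|]; simpl.
  destruct (Nat.eq_dec i p) as [->|Hne].
  - pose proof (sum_lt_nonneg p g Hg); lra.
  - specialize (Hg p); assert (g i <= sum_lt p g) by (apply IH; lia); lra.
Qed.

Lemma pair_tuple_dist_coord p a b a' b' i : (i < p)%nat ->
  d (a i) (a' i) + d (b i) (b' i) <= pair_tuple_dist d p a b a' b'.
Proof.
  intros Hi; unfold pair_tuple_dist.
  pose proof (sum_lt_term_le p (fun i => d (a i) (a' i)) i (fun _ => dist_nonneg _ _) Hi).
  pose proof (sum_lt_term_le p (fun i => d (b i) (b' i)) i (fun _ => dist_nonneg _ _) Hi).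
  simpl in *; lra.
Qed.

Lemma ball_open z eps : is_open d (fun y => d z y < eps).
Proof.
  intros y Hy. exists (eps - d z y); split; [lra|].
  intros w Hw; pose proof (dist_triangle z y w); lra.
Qed.

Definition eventually_bounded (v : nat -> X) : Prop :=
  exists c r N, forall n, (N <= n)%nat -> d c (v n) <= r.

Definition subseq_converges (v : nat -> X) (phi : nat -> nat) (z : X) : Prop :=
  strictly_increasing phi /\ converges_to d (fun m => v (phi m)) z.

Lemma eventually_bounded_reindex (v : nat -> X) (chi : nat -> nat) :
  eventually_bounded v -> (forall m, (m <= chi m)%nat) ->
  eventually_bounded (fun m => v (chi m)).
Proof.
  intros [c [r [N HN]]] Hchi. exists c, r, N; intros m Hm.
  apply HN; specialize (Hchi m); lia.
Qed.

Lemma converges_to_reindex (v : nat -> X) (z : X) (chi : nat -> nat) :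
  converges_to d v z -> (forall m, (m <= chi m)%nat) ->
  converges_to d (fun m => v (chi m)) z.
Proof.
  intros Hv Hchi eps Heps. destruct (Hv eps Heps) as [N HN].
  exists N; intros m Hm; apply HN; specialize (Hchi m); lia.
Qed.

Lemma proper_bounded_cluster (v : nat -> X) :
  proper d -> eventually_bounded v ->
  exists z, forall eps, 0 < eps -> forall M, exists n, (M <= n)%nat /\ d (v n) z < eps.
Proof.
  intros Hproper [c [r [N HN]]].
  (* Otherwise the balls that [v] eventually avoids cover the closed ball
     around [c], and a finite subcover leaves no room for [v n], [n] large. *)
  apply NNPP; intros Hno.
  assert (Hisolated : forall z, exists eps N',
            0 < eps /\ forall n, (N' <= n)%nat -> eps <= d z (v n)).
  { intros z. apply NNPP; intros Hz; apply Hno; exists z; intros eps Heps M.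
    apply NNPP; intros Hfar; apply Hz; exists eps, M; split; [exact Heps|].
    intros n Hn; apply Rnot_lt_le; rewrite dist_sym.
    intros Hlt; apply Hfar; exists n; split; assumption. }
  set (I := {z : X & {eps : R & {N' : nat |
              0 < eps /\ forall n, (N' <= n)%nat -> eps <= d z (v n)}}}).
  set (U := fun (i : I) y => d (projT1 i) y < projT1 (projT2 i)).
  destruct (Hproper c r I U) as [l Hl].
  - intros i; apply ball_open.
  - intros y _. destruct (Hisolated y) as [eps [N' [Heps HN']]].
    exists (existT _ y (existT _ eps (exist _ N' (conj Heps HN')))).
    unfold U; simpl; rewrite dist_refl; exact Heps.
  - destruct (list_upper_bound (fun i : I => proj1_sig (projT2 (projT2 i))) l N)
      as [n [HNn Hn]].
    destruct (Hl (v n) (HN n HNn)) as [[z [eps [N' [Heps HN']]]] [Hin HU]].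
    specialize (Hn _ Hin); unfold U in HU; simpl in Hn, HU.
    pose proof (HN' n Hn); lra.
Qed.

Lemma cluster_subseq (v : nat -> X) (z : X) :
  (forall eps, 0 < eps -> forall M, exists n, (M <= n)%nat /\ d (v n) z < eps) ->
  exists phi, subseq_converges v phi z.
Proof.
  intros Hz.
  pose (pick M k := epsilon (inhabits 0%nat)
                      (fun n => (M <= n)%nat /\ d (v n) z < / INR (S k))).
  assert (Hpick : forall M k, (M <= pick M k)%nat /\ d (v (pick M k)) z < / INR (S k)).
  { intros M k; apply epsilon_spec, Hz, Rinv_0_lt_compat, lt_0_INR; lia. }
  pose (phi := fix phi k := match k with
                            | O => pick O O
                            | S k' => pick (S (phi k')) (S k')
                            end).
  exists phi; split.
  - intros m; apply (Hpick (S (phi m)) (S m)).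
  - intros eps Heps. destruct (archimed_cor1 eps Heps) as [N [HN HN0]].
    exists N; intros n Hn.
    apply Rlt_le_trans with (/ INR (S n)); [destruct n; apply Hpick|].
    apply Rle_trans with (/ INR N); [|lra].
    apply Rinv_le_contravar; [apply lt_0_INR; lia | apply le_INR; lia].
Qed.

(* Junk value [(id, v 0)] when [v] has no convergent subsequence. *)
Definition extract (v : nat -> X) : (nat -> nat) * X :=
  match excluded_middle_informative
          (exists pz : (nat -> nat) * X, subseq_converges v (fst pz) (snd pz)) with
  | left H => proj1_sig (constructive_indefinite_description _ H)
  | right _ => (fun m => m, v 0%nat)
  end.

Lemma extract_increasing (v : nat -> X) : strictly_increasing (fst (extract v)).
Proof.
  unfold extract; destruct excluded_middle_informative as [H|H]; [|intros m; simpl; lia].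
  destruct constructive_indefinite_description as [pz Hpz]; apply Hpz.
Qed.

Lemma extract_converges (v : nat -> X) :
  proper d -> eventually_bounded v ->
  converges_to d (fun m => v (fst (extract v) m)) (snd (extract v)).
Proof.
  intros Hproper Hv.
  destruct (proper_bounded_cluster v Hproper Hv) as [z Hz].
  destruct (cluster_subseq v z Hz) as [phi Hphi].
  unfold extract; destruct excluded_middle_informative as [H|H].
  - destruct constructive_indefinite_description as [pz Hpz]; apply Hpz.
  - exfalso; apply H; exists (phi, z); exact Hphi.
Qed.

End Metric.

Section LimitStrategy.
Context {X A : Type} (d : X -> X -> R) (iota : nat -> X).
Variables (sig : nat -> list A -> nat) (del : nat -> R).

Definition answers (h : list A) (phi : nat -> nat) : nat -> X :=
  fun n => iota (sig (phi n) h).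

(* Histories are stored most recent move first, so that the recursion walks
   back through the prefixes; [nested rh] is the subsequence of strategies
   along which the answers at every prefix of [rev rh] converge, as long as
   they are bounded. *)
Fixpoint nested (rh : list A) : nat -> nat :=
  match rh with
  | [] => fun m => m
  | e :: rh' =>
      fun m => nested rh' (fst (extract d (answers (rev (e :: rh')) (nested rh'))) m)
  end.

Definition limit_answer (e : A) (rh : list A) : X :=
  snd (extract d (answers (rev (e :: rh)) (nested rh))).

Definition limit_strategy (h : list A) : nat :=
  match rev h with
  | [] => 0%nat
  | e :: rh =>
      epsilon (inhabits 0%nat) (fun t => d (limit_answer e rh) (iota t) < del (length rh) / 2)
  end.

Lemma nested_increasing (rh : list A) : strictly_increasing (nested rh).
Proof.
  induction rh as [|e rh IH]; [intros m; simpl; lia|].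
  cbn [nested]; apply strictly_increasing_comp; [exact IH | apply extract_increasing].
Qed.

Lemma nested_app (rh2 rh1 : list A) :
  exists chi, strictly_increasing chi /\
    forall m, nested (rh2 ++ rh1) m = nested rh1 (chi m).
Proof.
  induction rh2 as [|e rh2 [chi [Hchi Heq]]].
  { exists (fun m => m); split; [intros m; lia | reflexivity]. }
  set (psi := fst (extract d (answers (rev (e :: rh2 ++ rh1)) (nested (rh2 ++ rh1))))).
  exists (fun m => chi (psi m)); split.
  - apply strictly_increasing_comp; [exact Hchi | apply extract_increasing].
  - intros m; apply Heq.
Qed.

Lemma limit_answer_converges (e : A) (rh rh2 : list A) :
  is_metric d -> proper d ->
  eventually_bounded d (fun n => iota (sig n (rev (e :: rh)))) ->
  converges_to d (answers (rev (e :: rh)) (nested (rh2 ++ e :: rh))) (limit_answer e rh).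
Proof.
  intros Hd Hproper Hb.
  set (v := answers (rev (e :: rh)) (nested rh)).
  assert (Hv : converges_to d (fun m => v (fst (extract d v) m)) (snd (extract d v))).
  { apply extract_converges; [exact Hd | exact Hproper|].
    apply eventually_bounded_reindex with (v := fun n => iota (sig n (rev (e :: rh)))).
    - exact Hb.
    - apply strictly_increasing_ge, nested_increasing. }
  destruct (nested_app rh2 (e :: rh)) as [chi [Hchi Heq]].
  intros eps Heps.
  destruct (converges_to_reindex d _ _ chi Hv (strictly_increasing_ge chi Hchi) eps Heps)
    as [N HN].
  exists N; intros m Hm. unfold answers at 1; rewrite Heq. apply (HN m Hm).
Qed.

Lemma limit_strategy_close (e : A) (rh : list A) :
  dense_range d iota -> (forall j, 0 < del j) ->
  d (limit_answer e rh) (iota (limit_strategy (rev (e :: rh)))) < del (length rh) / 2.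
Proof.
  intros Hdense Hdel. unfold limit_strategy; rewrite rev_involutive.
  apply epsilon_spec, Hdense. specialize (Hdel (length rh)); lra.
Qed.

Definition prefix (e : nat -> A) (j : nat) : list A := map e (seq 0 (S j)).

Definition past (e : nat -> A) (j : nat) : list A := rev (map e (seq 0 j)).

Lemma prefix_rev_past (e : nat -> A) (j : nat) : prefix e j = rev (e j :: past e j).
Proof.
  unfold prefix, past; simpl rev; rewrite rev_involutive, seq_S, map_app; reflexivity.
Qed.

Lemma length_past (e : nat -> A) (j : nat) : length (past e j) = j.
Proof. unfold past; rewrite length_rev, length_map, length_seq; reflexivity. Qed.

Lemma past_split (e : nat -> A) (j k : nat) : (j < k)%nat ->
  exists rh2, past e k = rh2 ++ e j :: past e j.
Proof.
  intros Hjk. exists (rev (map e (seq (S j) (k - S j)))).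
  unfold past; replace k with (S j + (k - S j))%nat at 1 by lia.
  rewrite seq_app, map_app, rev_app_distr, (seq_S j 0), map_app, rev_app_distr.
  reflexivity.
Qed.

Theorem limit_strategy_shadows :
  is_metric d -> proper d -> dense_range d iota -> (forall j, 0 < del j) ->
  forall (e : nat -> A) (k : nat),
  (forall j, (j < k)%nat -> eventually_bounded d (fun n => iota (sig n (prefix e j)))) ->
  forall N, exists n, (N <= n)%nat /\ forall j, (j < k)%nat ->
    d (iota (limit_strategy (prefix e j))) (iota (sig n (prefix e j))) < del j.
Proof.
  intros Hd Hproper Hdense Hdel e k Hb N.
  assert (Hconv : forall j, (j < k)%nat -> exists M, forall m, (M <= m)%nat ->
            d (iota (sig (nested (past e k) m) (prefix e j))) (limit_answer (e j) (past e j))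
            < del j / 2).
  { intros j Hj. specialize (Hb j Hj); rewrite prefix_rev_past in *.
    destruct (past_split e j k Hj) as [rh2 ->].
    apply (limit_answer_converges _ _ rh2 Hd Hproper Hb).
    specialize (Hdel j); lra. }
  destruct (eventually_forall_lt k _ Hconv) as [M HM].
  exists (nested (past e k) (max M N)); split.
  - pose proof (strictly_increasing_ge _ (nested_increasing (past e k)) (max M N)); lia.
  - intros j Hj. specialize (HM (max M N) ltac:(lia) j Hj).
    pose proof (limit_strategy_close (e j) (past e j) Hdense Hdel) as Hclose.
    rewrite length_past, <- prefix_rev_past in Hclose.
    pose proof (dist_triangle d Hd (iota (limit_strategy (prefix e j)))
                  (limit_answer (e j) (past e j))
                  (iota (sig (nested (past e k) (max M N)) (prefix e j)))).
    pose proof (dist_sym d Hd (iota (limit_strategy (prefix e j)))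
                  (limit_answer (e j) (past e j))).
    pose proof (dist_sym d Hd (limit_answer (e j) (past e j))
                  (iota (sig (nested (past e k) (max M N)) (prefix e j)))).
    lra.
Qed.

End LimitStrategy.

Section Game.
Context {X O : Type} (d : X -> X -> R) (iota : nat -> X) (p : nat).

Definition moves (s : nat -> O) (x : nat -> nat) : nat -> O * nat := fun j => (s j, x j).

Definition c_move (sg : strategy2 O) (s : nat -> O) (x : nat -> nat) (j : nat) : nat :=
  if Nat.even j then x j else sg (prefix (moves s x) j).

Definition d_move (sg : strategy2 O) (s : nat -> O) (x : nat -> nat) (j : nat) : nat :=
  if Nat.even j then sg (prefix (moves s x) j) else x j.

Definition wins_play (f : nat -> Q) (a b : nat -> X) (sg : strategy2 O)
    (k : nat) (s : nat -> O) (x : nat -> nat) : Prop :=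
  (forall i j, (i < p)%nat -> (j < k)%nat ->
     Rabs (d (a i) (iota (c_move sg s x j)) - d (b i) (iota (d_move sg s x j)))
       < Q2R (f j)) /\
  (forall i j, (i < k)%nat -> (j < k)%nat ->
     Rabs (d (iota (c_move sg s x i)) (iota (c_move sg s x j))
           - d (iota (d_move sg s x i)) (iota (d_move sg s x j)))
       < Q2R (f i) + Q2R (f j)).

Lemma game_sim_iff (lt : O -> O -> Prop) f a b mu :
  game_sim d iota lt p f a b mu <->
  exists sg, forall k s x, complete_ordinals lt mu k s -> wins_play f a b sg k s x.
Proof. reflexivity. Qed.

Hypothesis Hd : is_metric d.

Lemma move_dists (sg sg' : strategy2 O) (s : nat -> O) (x : nat -> nat) (j : nat) :
  d (iota (c_move sg s x j)) (iota (c_move sg' s x j))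
  + d (iota (d_move sg s x j)) (iota (d_move sg' s x j))
  = d (iota (sg (prefix (moves s x) j))) (iota (sg' (prefix (moves s x) j))).
Proof. unfold c_move, d_move; destruct (Nat.even j); rewrite dist_refl by exact Hd; lra. Qed.

Lemma winning_answers_bounded (g : nat -> Q) (a b : nat -> X) (an bn : nat -> nat -> X)
    (sig : nat -> strategy2 O) (k : nat) (s : nat -> O) (x : nat -> nat) (j : nat) :
  (0 < p)%nat -> (j < k)%nat -> pair_tuple_limit d p an bn a b ->
  (forall n, wins_play g (an n) (bn n) (sig n) k s x) ->
  eventually_bounded d (fun n => iota (sig n (prefix (moves s x) j))).
Proof.
  intros Hp Hj Hlim Hwin. destruct (Hlim 1 Rlt_0_1) as [N HN].
  set (r := Q2R (g j) + 1).
  assert (Hanchor : forall n, (N <= n)%nat ->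
            Rabs (d (a 0%nat) (iota (c_move (sig n) s x j))
                  - d (b 0%nat) (iota (d_move (sig n) s x j))) < r).
  { intros n Hn.
    pose proof (dist_diff_perturb d Hd (a 0%nat) (iota (c_move (sig n) s x j))
      (b 0%nat) (iota (d_move (sig n) s x j)) (an n 0%nat) (iota (c_move (sig n) s x j))
      (bn n 0%nat) (iota (d_move (sig n) s x j))).
    pose proof (proj1 (Hwin n) 0%nat j Hp Hj).
    pose proof (pair_tuple_dist_coord d Hd p (an n) (bn n) a b 0%nat Hp).
    pose proof (dist_sym d Hd (a 0%nat) (an n 0%nat)).
    pose proof (dist_sym d Hd (b 0%nat) (bn n 0%nat)).
    specialize (HN n Hn); rewrite !dist_refl in * by exact Hd.
    unfold r; lra. }
  unfold c_move, d_move in Hanchor; destruct (Nat.even j).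
  - exists (b 0%nat), (d (a 0%nat) (iota (x j)) + r), N; intros n Hn.
    specialize (Hanchor n Hn); apply Rabs_def2 in Hanchor; lra.
  - exists (a 0%nat), (d (b 0%nat) (iota (x j)) + r), N; intros n Hn.
    specialize (Hanchor n Hn); apply Rabs_def2 in Hanchor; lra.
Qed.

Lemma limit_strategy_wins (f : nat -> Q) (a b : nat -> X) (an bn : nat -> nat -> X)
    (sig : nat -> strategy2 O) (k : nat) (s : nat -> O) (x : nat -> nat) :
  proper d -> dense_range d iota ->
  (0 < p)%nat -> (forall j, (f (S j) < f j)%Q) ->
  pair_tuple_limit d p an bn a b ->
  (forall n, wins_play (fun j => f (S j)) (an n) (bn n) (sig n) k s x) ->
  wins_play f a b (limit_strategy d iota sig (fun j => (Q2R (f j) - Q2R (f (S j))) / 2)) k s x.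
Proof.
  intros Hproper Hdense Hp Hdec Hlim Hwin.
  set (del := fun j => (Q2R (f j) - Q2R (f (S j))) / 2).
  set (tau := limit_strategy d iota sig del).
  assert (Hdel : forall j, 0 < del j).
  { intros j; unfold del; pose proof (Qlt_Rlt _ _ (Hdec j)); lra. }
  assert (Hslack : forall j, Q2R (f j) = Q2R (f (S j)) + 2 * del j)
    by (intros j; unfold del; lra).
  assert (Hnear : forall j, (j < k)%nat -> exists N, forall n, (N <= n)%nat ->
            pair_tuple_dist d p (an n) (bn n) a b < del j)
    by (intros j _; apply Hlim, Hdel).
  destruct (eventually_forall_lt k _ Hnear) as [N HN].
  destruct (limit_strategy_shadows d iota sig del Hd Hproper Hdense Hdel (moves s x) k
              (fun j Hj => winning_answers_bounded _ a b an bn sig k s x j Hp Hj Hlim Hwin) N)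
    as [n [Hn Hshadow]]; fold tau in Hshadow.
  destruct (Hwin n) as [Hwin1 Hwin2]; split.
  - intros i j Hi Hj.
    pose proof (dist_diff_perturb d Hd (a i) (iota (c_move tau s x j))
      (b i) (iota (d_move tau s x j)) (an n i) (iota (c_move (sig n) s x j))
      (bn n i) (iota (d_move (sig n) s x j))).
    pose proof (pair_tuple_dist_coord d Hd p (an n) (bn n) a b i Hi).
    pose proof (dist_sym d Hd (a i) (an n i)). pose proof (dist_sym d Hd (b i) (bn n i)).
    pose proof (Hwin1 i j Hi Hj). pose proof (move_dists tau (sig n) s x j).
    pose proof (Hshadow j Hj). pose proof (Hslack j).
    specialize (HN n Hn j Hj); cbv beta in *; lra.
  - intros i j Hi Hj.
    pose proof (dist_diff_perturb d Hd
      (iota (c_move tau s x i)) (iota (c_move tau s x j))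
      (iota (d_move tau s x i)) (iota (d_move tau s x j))
      (iota (c_move (sig n) s x i)) (iota (c_move (sig n) s x j))
      (iota (d_move (sig n) s x i)) (iota (d_move (sig n) s x j))).
    pose proof (Hwin2 i j Hi Hj).
    pose proof (move_dists tau (sig n) s x i). pose proof (move_dists tau (sig n) s x j).
    pose proof (Hshadow i Hi). pose proof (Hshadow j Hj).
    pose proof (Hslack i). pose proof (Hslack j). pose proof (Hdel i). pose proof (Hdel j).
    cbv beta in *; lra.
Qed.

End Game.

Theorem fact4p5 :
  forall (dM : nat -> nat -> R) (X : Type) (dX : X -> X -> R) (iota : nat -> X),
    is_metric dM ->
    is_completion dM dX iota ->
    proper dX ->
  forall (O : Type) (lt : O -> O -> Prop), well_order lt ->
  forall (alpha : O) (p : nat) (a b : nat -> X) (an bn : nat -> nat -> X),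
    pair_tuple_limit dX p an bn a b ->
    (forall n, R_gt dX iota lt p (an n) (bn n) alpha) ->
    R_gt dX iota lt p a b alpha.
Proof.
  intros dM X dX iota _ [Hd [_ [_ Hdense]]] Hproper O lt _ alpha p a b an bn Hlim Hn
    mu Hmu f Hf.
  apply game_sim_iff.
  destruct (Nat.eq_dec p 0) as [->|Hp].
  - destruct (proj1 (game_sim_iff _ _ _ _ _ _ _ _) (Hn 0%nat mu Hmu f Hf)) as [sg Hsg].
    exists sg; intros k s x Hc.
    split; [intros; lia | apply (Hsg k s x Hc)].
  - destruct (choice (fun n sg => forall k s x, complete_ordinals lt mu k s ->
                 wins_play dX iota p (fun j => f (S j)) (an n) (bn n) sg k s x))
      as [sig Hsig].
    { intros n; apply game_sim_iff, (Hn n mu Hmu), REC_shift, Hf. }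
    eexists; intros k s x Hc.
    apply (limit_strategy_wins dX iota p Hd f a b an bn sig k s x Hproper Hdense);
      [lia | apply Hf | exact Hlim | intros n; apply Hsig, Hc].
Qed.
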